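(* For all integers $n\ge1$ the following hold in $\mathbb V$: $$\sum_{k=0}^n G_k\star\tilde G_{n-k}\,q^{n-2k}=q\sum_{k=0}^{n-1}W_{-k}\star W_{n-k}\,q^{n-1-2k}=[2]_q^{n-1}(xy+yx)^{n-1}(qxy+q^{-1}yx),$$ $$\sum_{k=0}^n G_k\star\tilde G_{n-k}\,q^{2k-n}=q\sum_{k=0}^{n-1}W_{n-k}\star W_{-k}\,q^{n-1-2k}=[2]_q^{n-1}(q^{-1}xy+qyx)(xy+yx)^{n-1},$$ $$\sum_{k=0}^n \tilde G_k\star G_{n-k}\,q^{n-2k}=q\sum_{k=0}^{n-1}W_{n-k}\star W_{-k}\,q^{2k+1-n}=[2]_q^{n-1}(xy+yx)^{n-1}(q^{-1}xy+qyx),$$ $$\sum_{k=0}^n \tilde G_k\star G_{n-k}\,q^{2k-n}=q\sum_{k=0}^{n-1}W_{-k}\star W_{n-k}\,q^{2k+1-n}=[2]_q^{n-1}(qxy+q^{-1}yx)(xy+yx)^{n-1}.$$ On the right-hand sides, products and powers are taken in the free (concatenation) product.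
   Context: Let $\mathbb F$ be a field and let $q\in\mathbb F$ be nonzero and not a root of unity. Let $[m]_q=(q^m-q^{-m})/(q-q^{-1})$. Let $\mathbb V$ be the free associative $\mathbb F$-algebra on noncommuting $x,y$, with basis the words (including $1$). Juxtaposition denotes concatenation. Set $\langle x,x\rangle=\langle y,y\rangle=2$ and $\langle x,y\rangle=\langle y,x\rangle=-2$. The $q$-shuffle product $\star$ is the bilinear product determined as follows: - $1\star v=v\star 1=v$; - for nontrivial words $u=u_1\cdots u_r$ and $v=v_1\cdots v_s$, $$u\star v=u_1((u_2\cdots u_r)\star v)+v_1(u\star(v_2\cdots v_s))q^{\langle u_1,v_1\rangle+\cdots+\langle u_r,v_1\rangle}.$$ This makes $\mathbb V$ an associative algebra, the $q$-shuffle algebra. For $k\in\mathbb N$: - $W_{-k}=xyx\cdots x$ is the alternating word of length $2k+1$ beginning and ending with $x$; - $W_{k+1}=yxy\cdots y$ is the alternating word of length $2k+1$ beginning and ending with $y$; - $G_k=yxyx\cdots yx$ is the word of length $2k$; - $\tilde G_k=xyxy\cdots xy$ is the word of length $2k$; - $G_0=\tilde G_0=1$. *)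

From mathcomp Require Import all_boot all_algebra.
Set Implicit Arguments. Unset Strict Implicit. Unset Printing Implicit Defensive.
Import GRing.Theory.
Local Open Scope ring_scope.

(* The free algebra V on x, y over a field F.  A word is a seq bool (the empty word is 1).
   An element of V is represented by a formal linear combination of words
   (a list of (coefficient, word) pairs); two representations denote the same
   element of V iff all their word-coefficients agree ([eqV]). *)

Definition word := seq bool.
Definition lx : bool := true.
Definition ly : bool := false.

Definition V (F : fieldType) := seq (F * word).

Definition coef (F : fieldType) (v : V F) (w : word) : F :=
  \sum_(p <- v) (if p.2 == w then p.1 else 0).

Definition eqV (F : fieldType) (a b : V F) : Prop := forall w, coef a w = coef b w.

Definition vzero (F : fieldType) : V F := [::].
Definition vadd (F : fieldType) (a b : V F) : V F := a ++ b.
Definition vscale (F : fieldType) (c : F) (a : V F) : V F :=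
  [seq (c * p.1, p.2) | p <- a].
Definition vword (F : fieldType) (w : word) : V F := [:: (1, w)].

Definition vconcat (F : fieldType) (a b : V F) : V F :=
  [seq (p.1 * r.1, p.2 ++ r.2) | p <- a, r <- b].
Definition vpow (F : fieldType) (a : V F) (n : nat) : V F :=
  iter n (vconcat a) (vword F [::]).

Definition pairing (a b : bool) : int := if a == b then Posz 2 else - Posz 2.

Fixpoint wshuffle (F : fieldType) (q : F) (u : word) {struct u} : word -> V F :=
  fix wsh (v : word) : V F :=
  match u, v with
  | [::], _ => vword F v
  | _, [::] => vword F u
  | u1 :: u', v1 :: v' =>
      vadd (vconcat (vword F [:: u1]) (wshuffle q u' v))
           (vscale (q ^ (\sum_(a <- u) pairing a v1))
                   (vconcat (vword F [:: v1]) (wsh v')))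
  end.

Definition vshuffle (F : fieldType) (q : F) (a b : V F) : V F :=
  flatten [seq vscale (p.1 * r.1) (wshuffle q p.2 r.2) | p <- a, r <- b].

Definition qint (F : fieldType) (q : F) (m : int) : F :=
  (q ^ m - q ^ (- m)) / (q - q^-1).

Fixpoint alt (n : nat) (b : bool) : word :=
  if n is n'.+1 then b :: alt n' (~~ b) else [::].

(* W_{-k} = xyx...x, length 2k+1 *)
Definition Wm (k : nat) : word := alt k.*2.+1 lx.
(* W_{k} for k >= 1 : yxy...y, length 2k-1 *)
Definition Wp (k : nat) : word := alt k.*2.-1 ly.
Definition G (k : nat) : word := alt k.*2 ly.
Definition Gt (k : nat) : word := alt k.*2 lx.

Definition vsum (F : fieldType) (n : nat) (f : nat -> V F) : V F :=
  \big[@vadd F/vzero F]_(0 <= k < n) f k.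

Definition xy := [:: lx; ly].
Definition yx := [:: ly; lx].
Definition vxyyx (F : fieldType) : V F := vadd (vword F xy) (vword F yx).
Definition vlin (F : fieldType) (a b : F) : V F :=
  vadd (vscale a (vword F xy)) (vscale b (vword F yx)).

(* Write Gsum_n(t) = sum_k t^(n-2k) G_k ⋆ G~_(n-k) and
   Wsum_n(t) = sum_k t^(n-2k) W_(-k) ⋆ W_(n-k).  Every word occurring in them is a product
   of the blocks xy and yx, and peeling off the first block with the defining recursion
   of ⋆ gives
     Gsum_(n+1) = xy (t^-1 Wsum_n + t Gsum_n) + yx (t^-1 Gsum_n + q^2 t^-1 Wsum_n),
     Wsum_(n+1) = xy (t^-1 Wsum_n + t Gsum_n) + yx (q^-2 t Gsum_n + t Wsum_n).
   For t = q the two right-hand sides agree, so Gsum_(n+1) = Wsum_(n+1), which is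
   [2]_q (xy + yx) Gsum_n once n >= 1.  For t = q^-1 and S_n = Gsum_n + q^2 Wsum_n they read
   Gsum_(n+1) = (q^-1 xy + q yx) S_n and q^2 Wsum_(n+1) = (q xy + q^-1 yx) S_n, whence
   S_(n+1) = [2]_q (xy + yx) S_n.  The sums of G~_k ⋆ G_(n-k) and of W_(n-k) ⋆ W_(-k) are
   handled by exchanging x and y, which preserves ⋆ and maps G_k to G~_k and W_(-k) to
   W_(k+1). *)

From mathcomp Require Import all_boot all_algebra.
From mathcomp Require Import zify ring.
Import GRing.Theory.
Local Open Scope ring_scope.

Set Implicit Arguments.
Unset Strict Implicit.
Unset Printing Implicit Defensive.

Arguments G : simpl never.
Arguments Gt : simpl never.
Arguments Wm : simpl never.
Arguments Wp : simpl never.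
Arguments vpow : simpl never.

Section Coefficients.
Variable F : fieldType.
Implicit Types (a b c : V F) (u w : word).

Lemma coef_vadd a b w : coef (vadd a b) w = coef a w + coef b w.
Proof. by rewrite /coef /vadd big_cat. Qed.

Lemma coef_vscale (k : F) a w : coef (vscale k a) w = k * coef a w.
Proof.
rewrite /coef /vscale big_map mulr_sumr; apply: eq_bigr => p _ /=.
by case: ifP; rewrite ?mulr0.
Qed.

Lemma coef_vword u w : coef (vword F u) w = (u == w)%:R.
Proof. by rewrite /coef big_seq1; case: eqP. Qed.

Lemma coef_vsum n (f : nat -> V F) w :
  coef (vsum n f) w = \sum_(0 <= k < n) coef (f k) w.
Proof.
apply: (big_morph (fun a => coef a w)) => [a b|]; first exact: coef_vadd.
by rewrite /coef big_nil.
Qed.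

Lemma coef_vconcat a b w : coef (vconcat a b) w =
  \sum_(p <- a) \sum_(r <- b) (if p.2 ++ r.2 == w then p.1 * r.1 else 0).
Proof. by rewrite /coef /vconcat big_allpairs_dep. Qed.

Lemma coef_vconcatA a b c w :
  coef (vconcat (vconcat a b) c) w = coef (vconcat a (vconcat b c)) w.
Proof.
rewrite !coef_vconcat /vconcat big_allpairs_dep; apply: eq_bigr => p _.
rewrite big_allpairs_dep; apply: eq_bigr => r _; apply: eq_bigr => s _ /=.
by rewrite catA mulrA.
Qed.

Lemma coef_vconcatDl a b c w :
  coef (vconcat (vadd a b) c) w = coef (vconcat a c) w + coef (vconcat b c) w.
Proof. by rewrite !coef_vconcat big_cat. Qed.

Lemma coef_vconcatZl (k : F) a b w :
  coef (vconcat (vscale k a) b) w = k * coef (vconcat a b) w.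
Proof.
rewrite !coef_vconcat big_map mulr_sumr; apply: eq_bigr => p _.
rewrite mulr_sumr; apply: eq_bigr => r _ /=.
by case: ifP; rewrite ?mulr0 ?mulrA.
Qed.

Lemma vpowS a n : vpow a n.+1 = vconcat a (vpow a n).
Proof. by []. Qed.

Lemma coef_vconcat_nil b w : coef (vconcat (vword F [::]) b) w = coef b w.
Proof.
by rewrite coef_vconcat big_seq1 /coef; apply: eq_bigr => r _ /=; rewrite mul1r.
Qed.

Lemma coef_vconcat_cons (l : bool) u b w :
  coef (vconcat (vword F (l :: u)) b) w =
  if w is l' :: w' then (l == l')%:R * coef (vconcat (vword F u) b) w' else 0.
Proof.
case: w => [|l' w]; rewrite !coef_vconcat !big_seq1 /=; first by rewrite big1.
rewrite mulr_sumr; apply: eq_bigr => r _; rewrite eqseq_cons.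
by case: (l =P l') => _; rewrite ?mul1r ?mul0r.
Qed.

(* [lead2 fxy fyx] is the coefficient function of [xy * fxy + yx * fyx], where [fxy] and
   [fyx] are coefficient functions. *)
Definition lead2 (fxy fyx : word -> F) (w : word) : F :=
  if w is l :: l' :: w' then
    if l == l' then 0 else if l then fxy w' else fyx w'
  else 0.

Lemma eq_lead2 f f' g g' : f =1 f' -> g =1 g' -> lead2 f g =1 lead2 f' g'.
Proof. by move=> ef eg [|l [|l' w]] //=; rewrite ef eg. Qed.

Lemma lead2D f g f' g' w :
  lead2 f g w + lead2 f' g' w = lead2 (fun w => f w + f' w) (fun w => g w + g' w) w.
Proof. by case: w => [|l [|l' w]] /=; rewrite ?addr0 //; case: ifP; case: l; rewrite ?addr0. Qed.

Lemma lead2Z (k : F) f g w :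
  k * lead2 f g w = lead2 (fun w => k * f w) (fun w => k * g w) w.
Proof. by case: w => [|l [|l' w]] /=; rewrite ?mulr0 //; case: ifP; case: l; rewrite ?mulr0. Qed.

Lemma lead2_sum (I : Type) (r : seq I) (k : I -> F) f g w :
  \sum_(i <- r) k i * lead2 (f i) (g i) w =
  lead2 (fun w => \sum_(i <- r) k i * f i w) (fun w => \sum_(i <- r) k i * g i w) w.
Proof.
case: w => [|l [|l' w]] /=; try by rewrite big1 // => i _; rewrite mulr0.
by case: (l == l'); [rewrite big1 // => i _; rewrite mulr0 | case: l].
Qed.

Lemma coef_vlin (k k' : F) : coef (vlin k k') =1
  lead2 (fun w => k * coef (vword F [::]) w) (fun w => k' * coef (vword F [::]) w).
Proof.
move=> w; rewrite coef_vadd !coef_vscale !coef_vword.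
case: w => [|l [|l' w]] /=; rewrite /xy /yx ?eqseq_cons ?andbF ?mulr0 ?addr0 //.
by rewrite coef_vword; case: l; case: l'; rewrite /= ?mulr0 ?addr0 ?add0r ?mulr1.
Qed.

Lemma coef_vconcat_vlin (k k' : F) b :
  coef (vconcat (vlin k k') b) =1 lead2 (fun w => k * coef b w) (fun w => k' * coef b w).
Proof.
move=> w; rewrite coef_vconcatDl !coef_vconcatZl.
case: w => [|l [|l' w]]; rewrite !coef_vconcat_cons ?mulr0 ?addr0 //=.
by rewrite !coef_vconcat_nil; case: l; case: l';
  rewrite /= ?mul1r ?mul0r ?mulr0 ?addr0 ?add0r.
Qed.

Lemma coef_vconcat_vxyyx b : coef (vconcat (vxyyx F) b) =1 lead2 (coef b) (coef b).
Proof.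
move=> w; transitivity (coef (vconcat (vlin 1 1) b) w).
  by rewrite !coef_vconcatDl !coef_vconcatZl !mul1r.
by rewrite coef_vconcat_vlin; apply: eq_lead2 => v; rewrite mul1r.
Qed.
End Coefficients.

Lemma expfz_succ (F : fieldType) (t : F) (a b : int) :
  t != 0 -> a = b + 1 -> t ^ a = t * t ^ b.
Proof. by move=> t_neq0 ->; rewrite expfzDr // mulrC. Qed.

Lemma expfz_pred (F : fieldType) (t : F) (a b : int) :
  t != 0 -> a = b - 1 -> t ^ a = t^-1 * t ^ b.
Proof. by move=> t_neq0 ->; rewrite expfzDr // mulrC. Qed.

Section Shuffle.
Variables (F : fieldType) (q : F).

Definition shuffle_coef (u v w : word) : F := coef (wshuffle q u v) w.

Lemma shuffle_coef_nill v w : shuffle_coef [::] v w = (v == w)%:R.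
Proof. by case: v => [|b v]; rewrite /shuffle_coef /= coef_vword. Qed.

Lemma shuffle_coef_nilr u w : shuffle_coef u [::] w = (u == w)%:R.
Proof. by case: u => [|a u]; rewrite /shuffle_coef /= coef_vword. Qed.

Lemma shuffle_coef_cons a u b v c w :
  shuffle_coef (a :: u) (b :: v) (c :: w) =
  (a == c)%:R * shuffle_coef u (b :: v) w +
  (b == c)%:R * q ^ (\sum_(l <- a :: u) pairing l b) * shuffle_coef (a :: u) v w.
Proof.
rewrite /shuffle_coef /= coef_vadd coef_vscale !coef_vconcat_cons !coef_vconcat_nil.
by rewrite mulrCA mulrA.
Qed.

Lemma shuffle_coef_cons_nil a u b v : shuffle_coef (a :: u) (b :: v) [::] = 0.
Proof. by rewrite /shuffle_coef /= coef_vadd coef_vscale !coef_vconcat_cons mulr0 addr0. Qed.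

Lemma coef_vshuffle_vword u v w :
  coef (vshuffle q (vword F u) (vword F v)) w = shuffle_coef u v w.
Proof. by rewrite /vshuffle /= cats0 coef_vscale mulr1 mul1r. Qed.

End Shuffle.

Lemma G_succ k : G k.+1 = ly :: Wm k.
Proof. by rewrite /G /Wm doubleS. Qed.

Lemma Wm_G k : Wm k = lx :: G k.
Proof. by []. Qed.

Lemma Gt_succ k : Gt k.+1 = lx :: Wp k.+1.
Proof. by rewrite /Gt /Wp doubleS. Qed.

Lemma Wp_succ k : Wp k.+1 = ly :: Gt k.
Proof. by rewrite /Gt /Wp doubleS. Qed.

Lemma sum_pairing_alt n b c :
  \sum_(l <- alt n b) pairing l c = if odd n then pairing b c else 0.
Proof.
elim: n b => [|n IH] b; first by rewrite big_nil.
by rewrite big_cons {}IH /=; case: (odd n); rewrite ?addr0 //; case: b; case: c.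
Qed.

Lemma sum_pairing_G k c : \sum_(l <- G k) pairing l c = 0.
Proof. by rewrite sum_pairing_alt odd_double. Qed.

Lemma sum_pairing_Gt k c : \sum_(l <- Gt k) pairing l c = 0.
Proof. by rewrite sum_pairing_alt odd_double. Qed.

Definition swap (w : word) : word := map negb w.

Lemma swapK : involutive swap.
Proof. by move=> w; rewrite /swap -map_comp map_id_in // => l _ /=; rewrite negbK. Qed.

Lemma swap_cons l w : swap (l :: w) = ~~ l :: swap w.
Proof. by []. Qed.

Lemma swap_alt n b : swap (alt n b) = alt n (~~ b).
Proof. by elim: n b => [|n IH] b //=; rewrite IH. Qed.

Lemma swap_G k : swap (G k) = Gt k.
Proof. exact: swap_alt. Qed.

Lemma swap_Gt k : swap (Gt k) = G k.
Proof. exact: swap_alt. Qed.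

Lemma swap_Wm k : swap (Wm k) = Wp k.+1.
Proof. by rewrite /Wm /Wp swap_alt doubleS. Qed.

Lemma swap_Wp k : swap (Wp k.+1) = Wm k.
Proof. by rewrite -swap_Wm swapK. Qed.

Section ShuffleCoefficients.
Variables (F : fieldType) (q : F).

Definition shG k m := shuffle_coef q (G k) (Gt m).
Definition shW k m := shuffle_coef q (Wm k) (Wp m).

Ltac shuffle_simpl :=
  rewrite /shG /shW ?G_succ ?Gt_succ ?Wp_succ ?Wm_G /=
    ?shuffle_coef_cons ?shuffle_coef_cons_nil ?shuffle_coef_cons ?shuffle_coef_nill
    ?shuffle_coef_nilr /= ?big_cons ?sum_pairing_G ?sum_pairing_Gt /pairing /= ?eqseq_cons
    ?(addr0, mulr0, mul0r, mul1r, add0r).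

Lemma shG_succr k m : shG k m.+1 =1 lead2
  (fun w => (if k is k'.+1 then shW k' m.+1 w else 0) + shG k m w)
  (fun w => if k is k'.+1 then shG k' m.+1 w + q ^+ 2 * shW k' m.+1 w else 0).
Proof.
by case: k => [|k] [|l [|l' w]] /=; shuffle_simpl; try case: l; try case: l';
  shuffle_simpl.
Qed.

Lemma shG_nilr k : shG k.+1 0 =1 lead2 (fun=> 0) (shG k 0).
Proof.
by case=> [|l [|l' w]] /=; shuffle_simpl; try case: l; try case: l'; shuffle_simpl.
Qed.

Lemma shW_succr k m : shW k m.+1 =1 lead2
  (fun w => (if k is k'.+1 then shW k' m.+1 w else 0) + shG k m w)
  (fun w => (q ^+ 2)^-1 * (shG k m w + if m is _.+1 then q ^+ 2 * shW k m w else 0)).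
Proof.
by case: k => [|k] [|l [|l' w]]; case: m => [|m] /=; shuffle_simpl;
  try case: l; try case: l'; shuffle_simpl.
Qed.
End ShuffleCoefficients.

Section WeightedSums.
Variables (F : fieldType) (q t : F).
Hypotheses (q_neq0 : q != 0) (t_neq0 : t != 0).

Definition Gsum n w := \sum_(0 <= k < n.+1) t ^ (n%:Z - (2 * k)%:Z) * shG q k (n - k) w.
Definition Wsum n w := \sum_(0 <= k < n) t ^ (n%:Z - (2 * k)%:Z) * shW q k (n - k) w.

Lemma Gsum_succ n : Gsum n.+1 =1 lead2
  (fun w => t^-1 * Wsum n w + t * Gsum n w)
  (fun w => t^-1 * Gsum n w + q ^+ 2 * t^-1 * Wsum n w).
Proof.
move=> w; rewrite /Gsum big_nat_recr //= subnn shG_nilr.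
under eq_big_nat => k /andP[_ hk] do rewrite subSn // shG_succr.
rewrite lead2_sum lead2Z lead2D; apply: eq_lead2 => {}w /=.
- rewrite mulr0 addr0; under eq_bigr do rewrite mulrDr.
  rewrite big_split big_nat_recl //= mulr0 add0r; congr (_ + _).
    rewrite /Wsum mulr_sumr; apply: eq_big_nat => k /andP[_ hk].
    by rewrite subnSK // mulrA (@expfz_pred _ _ _ (n%:Z - (2 * k)%:Z)) //; lia.
  rewrite mulr_sumr; apply: eq_big_nat => k _.
  by rewrite mulrA (@expfz_succ _ _ _ (n%:Z - (2 * k)%:Z)) //; lia.
- rewrite big_nat_recl //= mulr0 add0r (big_nat_recr n) //= subnn.
  under eq_big_nat => k /andP[_ hk] do rewrite subnSK // mulrDr.
  rewrite big_split /= mulrDr -addrA [X in _ + X]addrC addrA.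
  congr (_ + _ + _).
  + rewrite mulr_sumr; apply: eq_big_nat => k _.
    by rewrite mulrA (@expfz_pred _ _ _ (n%:Z - (2 * k)%:Z)) //; lia.
  + by rewrite mulrA (@expfz_pred _ _ _ (n%:Z - (2 * n)%:Z)) //; lia.
  + rewrite /Wsum mulr_sumr; apply: eq_big_nat => k _.
    by rewrite (@expfz_pred _ _ _ (n%:Z - (2 * k)%:Z) t_neq0); [ring | lia].
Qed.

Lemma Wsum_succ n : Wsum n.+1 =1 lead2
  (fun w => t^-1 * Wsum n w + t * Gsum n w)
  (fun w => (q ^+ 2)^-1 * t * Gsum n w + t * Wsum n w).
Proof.
move=> w; rewrite /Wsum.
under eq_big_nat => k /andP[_ hk] do rewrite subSn // shW_succr.
rewrite lead2_sum; apply: eq_lead2 => {}w /=.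
- under eq_bigr do rewrite mulrDr.
  rewrite big_split big_nat_recl //= mulr0 add0r; congr (_ + _).
    rewrite mulr_sumr; apply: eq_big_nat => k /andP[_ hk].
    by rewrite subnSK // mulrA (@expfz_pred _ _ _ (n%:Z - (2 * k)%:Z)) //; lia.
  rewrite /Gsum mulr_sumr; apply: eq_big_nat => k _.
  by rewrite mulrA (@expfz_succ _ _ _ (n%:Z - (2 * k)%:Z)) //; lia.
- under eq_bigr do rewrite mulrDr mulrDr.
  rewrite big_split /=; congr (_ + _).
    rewrite /Gsum mulr_sumr; apply: eq_big_nat => k _.
    by rewrite (@expfz_succ _ _ _ (n%:Z - (2 * k)%:Z) t_neq0); [ring | lia].
  rewrite big_nat_recr //= subnn !mulr0 addr0 mulr_sumr; apply: eq_big_nat => k /andP[_ hk].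
  rewrite -(subnSK hk) /= subnSK // (@expfz_succ _ _ _ (n%:Z - (2 * k)%:Z) t_neq0); last lia.
  by rewrite mulKf ?expf_neq0 // mulrA.
Qed.
End WeightedSums.

Section ClosedForms.
Variables (F : fieldType) (q : F).
Hypothesis q_neq0 : q != 0.
Local Notation X := (vxyyx F).
Local Notation "[2]" := (q + q^-1).

Lemma qV_neq0 : q^-1 != 0. Proof. by rewrite invr_eq0. Qed.

Lemma Gsum0 t : Gsum q t 0 =1 coef (vword F [::]).
Proof. by move=> w; rewrite /Gsum big_nat1 mul1r /shG shuffle_coef_nill coef_vword. Qed.

Lemma Wsum0 t : Wsum q t 0 =1 fun=> 0.
Proof. by move=> w; rewrite /Wsum big_geq. Qed.

Lemma Wsum_q n w : Wsum q q n.+1 w = Gsum q q n.+1 w.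
Proof.
rewrite Gsum_succ // Wsum_succ //.
by apply: eq_lead2 => {}w //=; field.
Qed.

Lemma Gsum_q n w :
  Gsum q q n.+1 w = [2] ^+ n * coef (vconcat (vpow X n) (vlin q q^-1)) w.
Proof.
elim: n w => [|n IH] w.
  rewrite Gsum_succ // expr0 mul1r coef_vconcat_nil coef_vlin.
  by apply: eq_lead2 => {}w /=; rewrite Gsum0 Wsum0; field.
rewrite Gsum_succ // vpowS coef_vconcatA coef_vconcat_vxyyx lead2Z.
by apply: eq_lead2 => {}w /=; rewrite Wsum_q IH (exprS [2]); field.
Qed.

Lemma Gsum_add_Wsum_qV n w :
  Gsum q q^-1 n w + q ^+ 2 * Wsum q q^-1 n w = [2] ^+ n * coef (vpow X n) w.
Proof.
elim: n w => [|n IH] w.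
  by rewrite Gsum0 Wsum0 mulr0 addr0 mul1r.
rewrite Gsum_succ ?qV_neq0 // Wsum_succ ?qV_neq0 // lead2Z lead2D.
rewrite vpowS coef_vconcat_vxyyx (exprS [2]) lead2Z.
by apply: eq_lead2 => {}w /=; rewrite -[in RHS]mulrA -IH; field; rewrite q_neq0 oner_neq0.
Qed.

Lemma Gsum_qV n w :
  Gsum q q^-1 n.+1 w = [2] ^+ n * coef (vconcat (vlin q^-1 q) (vpow X n)) w.
Proof.
rewrite Gsum_succ ?qV_neq0 // coef_vconcat_vlin lead2Z.
by apply: eq_lead2 => {}w /=; rewrite mulrCA -Gsum_add_Wsum_qV; field; rewrite q_neq0 oner_neq0.
Qed.

Lemma Wsum_qV n w :
  q ^+ 2 * Wsum q q^-1 n.+1 w = [2] ^+ n * coef (vconcat (vlin q q^-1) (vpow X n)) w.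
Proof.
rewrite Wsum_succ ?qV_neq0 // coef_vconcat_vlin !lead2Z.
by apply: eq_lead2 => {}w /=; rewrite mulrCA -Gsum_add_Wsum_qV; field; rewrite ?q_neq0 ?oner_neq0.
Qed.
End ClosedForms.

Section Swap.
Variable F : fieldType.
Local Notation X := (vxyyx F).

Lemma shuffle_coef_swap (q : F) u v w :
  shuffle_coef q (swap u) (swap v) (swap w) = shuffle_coef q u v w.
Proof.
have pairingN a b : pairing (~~ a) (~~ b) = pairing a b by case: a; case: b.
elim: u v w => [|a u IHu] v w.
  by rewrite !shuffle_coef_nill (inj_eq (inj_map negb_inj)).
elim: v w => [|b v IHv] w.
  by rewrite !shuffle_coef_nilr (inj_eq (inj_map negb_inj)).
case: w => [|c w]; first by rewrite !shuffle_coef_cons_nil.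
rewrite !swap_cons !shuffle_coef_cons !(inj_eq negb_inj) -swap_cons IHu -swap_cons IHv.
by rewrite /swap big_map; under eq_bigr do rewrite pairingN.
Qed.

Lemma lead2_swap (f g : word -> F) w :
  lead2 f g (swap w) = lead2 (fun w => g (swap w)) (fun w => f (swap w)) w.
Proof.
by case: w => [|l [|l' w]] //=; rewrite (inj_eq negb_inj); case: (l == l'); case: l.
Qed.

Lemma coef_nil_swap w : coef (vword F [::]) (swap w) = coef (vword F [::]) w.
Proof. by rewrite !coef_vword; case: w. Qed.

Lemma coef_vpow_swap n w : coef (vpow X n) (swap w) = coef (vpow X n) w.
Proof.
elim: n w => [|n IH] w; first exact: coef_nil_swap.
by rewrite vpowS !coef_vconcat_vxyyx lead2_swap; apply: eq_lead2 => {}w; rewrite IH.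
Qed.

Lemma coef_vlin_vpow_swap (k k' : F) n w :
  coef (vconcat (vlin k k') (vpow X n)) (swap w) = coef (vconcat (vlin k' k) (vpow X n)) w.
Proof.
by rewrite !coef_vconcat_vlin lead2_swap; apply: eq_lead2 => {}w; rewrite coef_vpow_swap.
Qed.

Lemma coef_vpow_vlin_swap (k k' : F) n w :
  coef (vconcat (vpow X n) (vlin k k')) (swap w) = coef (vconcat (vpow X n) (vlin k' k)) w.
Proof.
elim: n w => [|n IH] w.
  rewrite !coef_vconcat_nil !coef_vlin lead2_swap.
  by apply: eq_lead2 => {}w; rewrite coef_nil_swap.
rewrite vpowS !coef_vconcatA !coef_vconcat_vxyyx lead2_swap.
by apply: eq_lead2 => {}w; rewrite IH.
Qed.
End Swap.

Section ShuffleSums.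
Variables (F : fieldType) (q : F).
Hypothesis q_neq0 : q != 0.

Lemma coef_sum_G_Gt n w :
  coef (vsum n.+1 (fun k => vscale (q ^ (n%:Z - (2 * k)%:Z))
    (vshuffle q (vword F (G k)) (vword F (Gt (n - k)))))) w = Gsum q q n w.
Proof. by rewrite coef_vsum; apply: eq_bigr => k _; rewrite coef_vscale coef_vshuffle_vword. Qed.

Lemma coef_sum_G_Gt_inv n w :
  coef (vsum n.+1 (fun k => vscale (q ^ ((2 * k)%:Z - n%:Z))
    (vshuffle q (vword F (G k)) (vword F (Gt (n - k)))))) w = Gsum q q^-1 n w.
Proof.
rewrite coef_vsum; apply: eq_bigr => k _.
by rewrite coef_vscale coef_vshuffle_vword exprz_inv opprB.
Qed.

Lemma coef_sum_Gt_G n w :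
  coef (vsum n.+1 (fun k => vscale (q ^ (n%:Z - (2 * k)%:Z))
    (vshuffle q (vword F (Gt k)) (vword F (G (n - k)))))) w = Gsum q q n (swap w).
Proof.
rewrite coef_vsum; apply: eq_bigr => k _.
by rewrite coef_vscale coef_vshuffle_vword -shuffle_coef_swap swap_Gt swap_G.
Qed.

Lemma coef_sum_Gt_G_inv n w :
  coef (vsum n.+1 (fun k => vscale (q ^ ((2 * k)%:Z - n%:Z))
    (vshuffle q (vword F (Gt k)) (vword F (G (n - k)))))) w = Gsum q q^-1 n (swap w).
Proof.
rewrite coef_vsum; apply: eq_bigr => k _.
by rewrite coef_vscale coef_vshuffle_vword -shuffle_coef_swap swap_Gt swap_G exprz_inv opprB.
Qed.

Lemma coef_sum_Wm_Wp n w :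
  coef (vscale q (vsum n (fun k => vscale (q ^ (n%:Z - 1 - (2 * k)%:Z))
    (vshuffle q (vword F (Wm k)) (vword F (Wp (n - k))))))) w = Wsum q q n w.
Proof.
rewrite coef_vscale coef_vsum mulr_sumr; apply: eq_bigr => k _.
rewrite coef_vscale coef_vshuffle_vword.
by rewrite (@expfz_succ _ q (n%:Z - (2 * k)%:Z) (n%:Z - 1 - (2 * k)%:Z)) ?mulrA //; lia.
Qed.

Lemma coef_sum_Wm_Wp_inv n w :
  coef (vscale q (vsum n (fun k => vscale (q ^ ((2 * k)%:Z + 1 - n%:Z))
    (vshuffle q (vword F (Wm k)) (vword F (Wp (n - k))))))) w = q ^+ 2 * Wsum q q^-1 n w.
Proof.
rewrite coef_vscale coef_vsum /Wsum /shW !mulr_sumr; apply: eq_bigr => k _.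
rewrite coef_vscale coef_vshuffle_vword exprz_inv.
by rewrite (@expfz_pred _ q (- (n%:Z - (2 * k)%:Z)) ((2 * k)%:Z + 1 - n%:Z) q_neq0); [field | lia].
Qed.

Lemma coef_sum_Wp_Wm n w :
  coef (vscale q (vsum n (fun k => vscale (q ^ ((2 * k)%:Z + 1 - n%:Z))
    (vshuffle q (vword F (Wp (n - k))) (vword F (Wm k)))))) w = Wsum q q n (swap w).
Proof.
rewrite coef_vscale coef_vsum /Wsum big_nat_rev mulr_sumr; apply: eq_big_nat => k /andP[_ hk].
rewrite add0n coef_vscale coef_vshuffle_vword (subKn hk) -shuffle_coef_swap.
rewrite swap_Wp swap_Wm subnSK //.
by rewrite (@expfz_succ _ q (n%:Z - (2 * k)%:Z) ((2 * (n - k.+1))%:Z + 1 - n%:Z)) ?mulrA //; lia.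
Qed.

Lemma coef_sum_Wp_Wm_inv n w :
  coef (vscale q (vsum n (fun k => vscale (q ^ (n%:Z - 1 - (2 * k)%:Z))
    (vshuffle q (vword F (Wp (n - k))) (vword F (Wm k)))))) w = q ^+ 2 * Wsum q q^-1 n (swap w).
Proof.
rewrite coef_vscale coef_vsum /Wsum /shW big_nat_rev !mulr_sumr; apply: eq_big_nat => k /andP[_ hk].
rewrite add0n coef_vscale coef_vshuffle_vword (subKn hk) -shuffle_coef_swap.
rewrite swap_Wp swap_Wm subnSK // exprz_inv.
rewrite (@expfz_pred _ q (- (n%:Z - (2 * k)%:Z)) (n%:Z - 1 - (2 * (n - k.+1))%:Z) q_neq0).
  by field.
lia.
Qed.
End ShuffleSums.

Lemma qint2 (F : fieldType) (q : F) : q != 0 -> q ^+ 2 != 1 -> qint q 2 = q + q^-1.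
Proof.
move=> q_neq0 q2_neq1; have qqV_neq0 : q - q^-1 != 0.
  by apply: contra q2_neq1; rewrite subr_eq0 => /eqP qE; rewrite expr2 {2}qE divff.
have -> : qint q 2 = (q ^+ 2 - (q ^+ 2)^-1) / (q - q^-1) by [].
by apply: (mulIf qqV_neq0); rewrite divfK //; field.
Qed.

Theorem proposition12p6 (F : fieldType) (q : F)
  (hq0 : q != 0) (hq : forall m : nat, (0 < m)%N -> q ^+ m != 1)
  (n : nat) (hn : (1 <= n)%N) :
  let sh := vshuffle q in
  let R := vscale (qint q 2 ^+ (n - 1)) in
  (* line 1 *)
  (eqV (vsum n.+1 (fun k => vscale (q ^ (n%:Z - (2 * k)%:Z)) (sh (vword F (G k)) (vword F (Gt (n - k))))))
       (vscale q (vsum n (fun k => vscale (q ^ (n%:Z - 1 - (2 * k)%:Z)) (sh (vword F (Wm k)) (vword F (Wp (n - k))))))) /\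
   eqV (vscale q (vsum n (fun k => vscale (q ^ (n%:Z - 1 - (2 * k)%:Z)) (sh (vword F (Wm k)) (vword F (Wp (n - k)))))))
       (R (vconcat (vpow (vxyyx F) (n - 1)) (vlin q q^-1)))) /\
  (* line 2 *)
  (eqV (vsum n.+1 (fun k => vscale (q ^ ((2 * k)%:Z - n%:Z)) (sh (vword F (G k)) (vword F (Gt (n - k))))))
       (vscale q (vsum n (fun k => vscale (q ^ (n%:Z - 1 - (2 * k)%:Z)) (sh (vword F (Wp (n - k))) (vword F (Wm k)))))) /\
   eqV (vscale q (vsum n (fun k => vscale (q ^ (n%:Z - 1 - (2 * k)%:Z)) (sh (vword F (Wp (n - k))) (vword F (Wm k))))))
       (R (vconcat (vlin q^-1 q) (vpow (vxyyx F) (n - 1))))) /\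
  (* line 3 *)
  (eqV (vsum n.+1 (fun k => vscale (q ^ (n%:Z - (2 * k)%:Z)) (sh (vword F (Gt k)) (vword F (G (n - k))))))
       (vscale q (vsum n (fun k => vscale (q ^ ((2 * k)%:Z + 1 - n%:Z)) (sh (vword F (Wp (n - k))) (vword F (Wm k)))))) /\
   eqV (vscale q (vsum n (fun k => vscale (q ^ ((2 * k)%:Z + 1 - n%:Z)) (sh (vword F (Wp (n - k))) (vword F (Wm k))))))
       (R (vconcat (vpow (vxyyx F) (n - 1)) (vlin q^-1 q)))) /\
  (* line 4 *)
  (eqV (vsum n.+1 (fun k => vscale (q ^ ((2 * k)%:Z - n%:Z)) (sh (vword F (Gt k)) (vword F (G (n - k))))))
       (vscale q (vsum n (fun k => vscale (q ^ ((2 * k)%:Z + 1 - n%:Z)) (sh (vword F (Wm k)) (vword F (Wp (n - k))))))) /\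
   eqV (vscale q (vsum n (fun k => vscale (q ^ ((2 * k)%:Z + 1 - n%:Z)) (sh (vword F (Wm k)) (vword F (Wp (n - k)))))))
       (R (vconcat (vlin q q^-1) (vpow (vxyyx F) (n - 1))))).
Proof.
move=> sh R; rewrite {}/sh {}/R.
case: n hn => [|n] // _; rewrite subn1 /= qint2 ?hq //.
split; [|split; [|split]]; split=> w.
- by rewrite coef_sum_G_Gt (coef_sum_Wm_Wp hq0) (Wsum_q hq0).
- by rewrite (coef_sum_Wm_Wp hq0) coef_vscale (Wsum_q hq0) (Gsum_q hq0).
- rewrite coef_sum_G_Gt_inv (coef_sum_Wp_Wm_inv hq0) (Wsum_qV hq0) (Gsum_qV hq0).
  by rewrite coef_vlin_vpow_swap.
- by rewrite (coef_sum_Wp_Wm_inv hq0) coef_vscale (Wsum_qV hq0) coef_vlin_vpow_swap.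
- by rewrite coef_sum_Gt_G (coef_sum_Wp_Wm hq0) (Wsum_q hq0).
- by rewrite (coef_sum_Wp_Wm hq0) coef_vscale (Wsum_q hq0) (Gsum_q hq0) coef_vpow_vlin_swap.
- rewrite coef_sum_Gt_G_inv (coef_sum_Wm_Wp_inv hq0) (Wsum_qV hq0) (Gsum_qV hq0).
  by rewrite coef_vlin_vpow_swap.
- by rewrite (coef_sum_Wm_Wp_inv hq0) coef_vscale (Wsum_qV hq0).
Qed.
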